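(* Let $k \geq 3$ be an integer and let $n$ be a $k$-admissible integer such that $2k+1 < n \leq 3k$. Any partial $k$-star design of order $n$ with three stars is completable.
   Context: A $k$-star is a copy of $K_{1,k}$. A partial $k$-star design of order $n$ is a pair $(V,\mathcal{A})$ where $V$ is a set of $n$ vertices and $\mathcal{A}$ is a set of edge-disjoint $k$-stars that are subgraphs of the complete graph $K_V$; it is completable if there is a set $\mathcal{B}\supseteq\mathcal{A}$ of edge-disjoint $k$-stars in $K_V$ covering all edges of $K_V$. A positive integer $n$ is $k$-admissible if $\binom{n}{2}\equiv 0 \pmod{k}$. *)

From mathcomp Require Import all_boot.
Set Implicit Arguments. Unset Strict Implicit. Unset Printing Implicit Defensive.

(* A star is given by its center and its set of leaves. *)
Definition star (n : nat) := ('I_n * {set 'I_n})%type.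

Definition is_kstar (n k : nat) (s : star n) : bool :=
  (s.1 \notin s.2) && (#|s.2| == k).

Definition star_edges (n : nat) (s : star n) : {set {set 'I_n}} :=
  [set [set s.1; x] | x in s.2].

Definition complete_edges (n : nat) : {set {set 'I_n}} :=
  [set e : {set 'I_n} | #|e| == 2].

Definition partial_kstar_design (n k : nat) (A : {set star n}) : Prop :=
  (forall s, s \in A -> is_kstar k s) /\
  (forall s t, s \in A -> t \in A -> s != t ->
     [disjoint star_edges s & star_edges t]).

Definition completable (n k : nat) (A : {set star n}) : Prop :=
  exists B : {set star n},
    A \subset B /\ partial_kstar_design k B /\
    \bigcup_(s in B) star_edges s = complete_edges n.

Definition admissible (k n : nat) : bool := 'C(n, 2) %% k == 0.

From mathcomp Require Import all_boot zify.
Set Implicit Arguments. Unset Strict Implicit. Unset Printing Implicit Defensive.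

(* Orient every edge of K_n so that the edges of each given star point to its
   center and every vertex receives a multiple of k edges: the edges oriented
   towards v that lie in no given star can then be cut into k-stars centered
   at v, which completes the design.  Such an orientation exists by Hall's
   theorem for orientations with prescribed in-degrees.  Writing
   C(n,2) = Q k, give capacity 2k to the vertices of a set H of Q - n vertices
   containing the centers and otherwise only vertices that are leaves of at
   most one star, and capacity k to the others; the capacities then add up to
   C(n,2).  Hall's condition (the edges forced into a vertex set S do not
   exceed its capacity) is checked directly when |S| <= 2k, and by counting
   over the complement of S when |S| > 2k. *)

Section HallOrientation.
Variables (I V : finType) (allowed : I -> {set V}).
Implicit Types (g : I -> V) (E : {set I}) (e : I) (v : V) (S : {set V}).

Definition indegree (g : I -> V) (E : {set I}) (v : V) := #|[set e in E | g e == v]|.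

Lemma indegree0 g v : indegree g set0 v = 0.
Proof. by apply/eqP; rewrite cards_eq0; apply/eqP/setP => e; rewrite !inE. Qed.

Lemma indegreeD1 g E e v : e \in E ->
  indegree g E v = (g e == v) + indegree g (E :\ e) v.
Proof.
move=> Ee; rewrite /indegree (cardsD1 e) !inE Ee; congr (_ + _).
by apply: eq_card => x; rewrite !inE andbA.
Qed.

Lemma eq_indegree g g' E v : {in E, g =1 g'} -> indegree g E v = indegree g' E v.
Proof.
by move=> eq_g; apply: eq_card => e; rewrite !inE; case: (boolP (e \in E)) => // /eq_g->.
Qed.

Lemma sum_indegree g E S :
  \sum_(v in S) indegree g E v = #|[set e in E | g e \in S]|.
Proof.
rewrite /indegree -sum1_card (partition_big g (mem S)) => [|e]; last by rewrite inE => /andP[].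
apply: eq_bigr => v Sv; rewrite -sum1_card; apply: eq_bigl => e.
by rewrite !inE; case: (g e =P v) => [->|]; rewrite ?Sv ?andbT ?andbF.
Qed.

Lemma indegree_eq_cap g E (cap : V -> nat) :
  (forall v, indegree g E v <= cap v) -> \sum_v cap v = #|E| ->
  forall v, indegree g E v = cap v.
Proof.
move=> le_cap sum_cap; have := leqif_sum (fun v (_ : true) => leqif_eq (le_cap v)).
have -> : \sum_v indegree g E v = #|E|.
  rewrite (eq_bigl (mem [set: V])) => [|v]; last by rewrite !inE.
  by rewrite sum_indegree; apply: eq_card => e; rewrite !inE andbT.
rewrite sum_cap => -[_]; rewrite eqxx => /esym/forallP eq_cap v.
exact/eqP/eq_cap.
Qed.

Lemma indegreeID g E F v :
  indegree g E v = indegree g (E :&: F) v + indegree g (E :\: F) v.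
Proof.
rewrite /indegree -(cardsID F [set e in E | g e == v]).
by congr (_ + _); apply: eq_card => e; rewrite !inE; case: (e \in F); rewrite ?andbF ?andbT.
Qed.

Definition reorientable (g : I -> V) (E : {set I}) : rel V :=
  fun a b => [exists e in E, (g e == a) && (b \in allowed e)].

Lemma reorient_path E p : forall g x, {in E, forall e, g e \in allowed e} ->
  path (reorientable g E) x p -> uniq (x :: p) ->
  exists2 g', {in E, forall e, g' e \in allowed e} &
    forall v, indegree g' E v + (v == x) = indegree g E v + (v == last x p).
Proof.
elim: p => [|y p IHp] g x g_ok; first by exists g.
rewrite /= => /andP[/existsP[e /and3P[Ee /eqP gex ye]] yp] /andP[xNyp uniq_yp].
pose g1 e' := if e' == e then y else g e'.
have g1_ok : {in E, forall e, g1 e \in allowed e}.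
  by move=> e' Ee'; rewrite /g1; case: eqP => [->|_]; last exact: g_ok.
have deg1 v : indegree g1 E v + (v == x) = indegree g E v + (v == y).
  rewrite !(indegreeD1 _ _ Ee) (@eq_indegree g1 g) => [|e' /setD1P[/negbTE ne _]]; last first.
    by rewrite /g1 ne.
  rewrite /g1 eqxx gex !(eq_sym _ v); lia.
have yp1 : path (reorientable g1 E) y p.
  apply: (@sub_in_path _ [pred a | a != x] (reorientable g E)) yp; last first.
    by apply/allP => z zp; rewrite inE; apply: contraNneq xNyp => <-.
  move=> a b a_x _ /existsP[e' /and3P[Ee' /eqP ga be']].
  apply/existsP; exists e'; rewrite Ee' be' andbT /g1 /=.
  case: (eqVneq e' e) => [e'e|_]; last by rewrite ga.
  by move: a_x; rewrite inE -ga e'e gex eqxx.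
have [g' g'_ok deg'] := IHp g1 y g1_ok yp1 uniq_yp.
by exists g' => // v; have := deg' v; have := deg1 v; rewrite /=; lia.
Qed.

Lemma hall_orientation (cap : V -> nat) (v0 : V) E :
  (forall S, #|[set e in E | allowed e \subset S]| <= \sum_(v in S) cap v) ->
  exists2 g, {in E, forall e, g e \in allowed e} & forall v, indegree g E v <= cap v.
Proof.
elim: {E}_.+1 {-2}E (ltnSn #|E|) => // m IHm E szE hall.
have [->|[e0 Ee0]] := set_0Vmem E; first by exists (fun=> v0) => [e|v]; rewrite ?inE ?indegree0.
set E' := E :\ e0.
have szE' : #|E'| < m by rewrite (cardsD1 e0) Ee0 add1n ltnS in szE.
have hall' S : #|[set e in E' | allowed e \subset S]| <= \sum_(v in S) cap v.
  apply: leq_trans (hall S); apply: subset_leq_card.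
  by apply/subsetP => e; rewrite !inE => /andP[/andP[_ ->] ->].
have [g' g'_ok g'_cap] := IHm E' szE' hall'.
pose R := [set y | [exists x in allowed e0, connect (reorientable g' E') x y]].
have [/existsP[y /andP[Ry y_free]] | /existsPn R_full] :=
  boolP [exists y in R, indegree g' E' y < cap y].
  move: Ry; rewrite inE => /existsP[x /andP[x_e0 /connectP[p x_p y_last]]].
  subst y; case: (shortenP x_p) y_free => p' x_p' uniq_p' _ y_free.
  have [g'' g''_ok deg''] := reorient_path g'_ok x_p' uniq_p'.
  exists (fun e => if e == e0 then x else g'' e) => [e Ee|v].
    by case: eqP => [->//|/eqP ne]; apply: g''_ok; rewrite !inE ne.
  rewrite (indegreeD1 _ _ Ee0) eqxx (eq_indegree (g' := g'')) => [|e /setD1P[/negbTE-> //]].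
  have := deg'' v; rewrite addnC (eq_sym x); case: (eqVneq v (last x p')) => [->|_] deg_v.
    by rewrite deg_v addn1.
  by rewrite deg_v addn0.
(* Otherwise [R] is saturated and closed under reorientation, and it contains
   [allowed e0]: Hall's condition fails on [R]. *)
have R_closed e : e \in E' -> g' e \in R -> allowed e \subset R.
  move=> E'e; rewrite inE => /existsP[x /andP[x_e0 x_ge]].
  apply/subsetP => y ye; rewrite inE; apply/existsP; exists x; rewrite x_e0.
  by apply: connect_trans x_ge (connect1 _); apply/existsP; exists e; rewrite E'e eqxx.
have e0_R : allowed e0 \subset R.
  by apply/subsetP => x x_e0; rewrite inE; apply/existsP; exists x; rewrite x_e0 connect0.
have : #|[set e in E' | g' e \in R]| < #|[set e in E | allowed e \subset R]|.
  rewrite (cardsD1 e0 [set e in E | _]) !inE Ee0 e0_R add1n ltnS.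
  apply: subset_leq_card; apply/subsetP => e; rewrite !inE => /andP[/andP[ne Ee] Re].
  by apply/and3P; split => //; apply: R_closed; rewrite // !inE ?ne.
rewrite -sum_indegree => /leq_trans/(_ (hall R)); rewrite ltnNge => /negP[].
by apply: leq_sum => y Ry; rewrite leqNgt; have := R_full y; rewrite Ry.
Qed.
End HallOrientation.

Section FinsetCounting.
Variable T : finType.
Implicit Types X Y : {set T}.

Lemma card_set_cond (P Q : pred T) : #|[set x | P x && Q x]| = \sum_(x | P x) Q x.
Proof.
rewrite -sum1_card (eq_bigl (fun x => P x && Q x)) => [|x]; last by rewrite inE.
by rewrite big_mkcondr; apply: eq_bigr => x _; case: (Q x).
Qed.

Lemma exists_subset_card X m : m <= #|X| -> exists2 Y : {set T}, Y \subset X & #|Y| = m.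
Proof.
case/card_geqP => s [uniq_s <- sX]; exists [set x in s]; last by rewrite cardsE; apply/card_uniqP.
by apply/subsetP => x; rewrite inE; apply: sX.
Qed.

Lemma uniform_partition k X : 0 < k -> k %| #|X| ->
  exists2 P : {set {set T}}, partition P X & {in P, forall B : {set T}, #|B| = k}.
Proof.
move=> k_gt0; elim: {X}_.+1 {-2}X (ltnSn #|X|) => // m IHm X szX kX.
have [->|X_n0] := eqVneq X set0; first by exists set0 => [|B]; rewrite ?partition_set0 ?inE.
have kX_le : k <= #|X| by apply: dvdn_leq; rewrite // card_gt0.
have [Y YX cardY] := exists_subset_card kX_le.
have cardXY : #|X :\: Y| = #|X| - k by rewrite cardsDS ?cardY.
have szXY : #|X :\: Y| < m by rewrite cardXY; lia.
have kXY : k %| #|X :\: Y| by rewrite cardXY dvdn_sub.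
have [P partP unifP] := IHm _ szXY kXY.
exists (Y |: P) => [|B /setU1P[->//|/unifP//]].
have -> : X = Y :|: X :\: Y by rewrite setDE setUIr setUCr setIT (setUidPr YX).
apply: partitionU1 partP _ _; first by rewrite -card_gt0 cardY.
by rewrite disjoints_subset setCD subsetUr.
Qed.

Lemma leq_card_bigcup (I : finType) (J : {set I}) (F : I -> {set T}) :
  #|\bigcup_(i in J) F i| <= \sum_(i in J) #|F i|.
Proof.
elim/big_ind2: _ => [|m X n Y Xm Yn|//]; first by rewrite cards0.
exact: leq_trans (leq_card_setU X Y) (leq_add Xm Yn).
Qed.

Lemma card_bigcup_disjoint (I : finType) (J : {set I}) (F : I -> {set T}) :
  {in J &, forall i j, i != j -> [disjoint F i & F j]} ->
  #|\bigcup_(i in J) F i| = \sum_(i in J) #|F i|.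
Proof.
move=> disjF; pose F' i := if i \in J then F i else set0.
have disjF' i j : i != j -> [disjoint F' i & F' j].
  rewrite /F'; case: ifP => Ji; last by rewrite disjoints_subset sub0set.
  by case: ifP => Jj; [exact: disjF | rewrite disjoint_sym disjoints_subset sub0set].
have := partition_disjoint_bigcup addn (fun=> 1) disjF'.
have -> : \bigcup_i F' i = \bigcup_(i in J) F i by rewrite [RHS]big_mkcond.
rewrite sum1_card => ->; rewrite [RHS]big_mkcond; apply: eq_bigr => i _.
by rewrite sum1_card /F'; case: ifP; rewrite ?cards0.
Qed.

Lemma leq_card_imsetD (T' : finType) (f : T -> T') X (S : {set T'}) :
  #|f @: X :\: S| + #|[set x in X | f x \in S]| <= #|X|.
Proof.
have sub : f @: X :\: S \subset f @: [set x in X | f x \notin S].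
  by apply/subsetP => _ /setDP[/imsetP[x Xx ->] fxS]; rewrite imset_f // inE Xx.
apply: leq_trans (leq_add (leq_trans (subset_leq_card sub) (leq_imset_card _ _)) (leqnn _)) _.
rewrite !card_set_cond -big_split -sum1_card; apply: leq_sum => x _.
by case: (f x \in S).
Qed.
End FinsetCounting.

Lemma double_count (I J : finType) (P : pred I) (Q : pred J) (R : I -> J -> bool) :
  \sum_(i | P i) #|[set j | Q j && R i j]| = \sum_(j | Q j) #|[set i | P i && R i j]|.
Proof.
under eq_bigr do rewrite card_set_cond.
by rewrite exchange_big; apply: eq_bigr => j _; rewrite card_set_cond.
Qed.

Lemma set2_injr (T : finType) (v x y : T) : x != v -> [set v; x] = [set v; y] -> x = y.
Proof.
move=> xNv Exy; have : x \in [set v; y] by rewrite -Exy !inE eqxx orbT.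
by rewrite !inE (negbTE xNv) => /eqP.
Qed.

Section Stars.
Variables n k : nat.
Implicit Types (s : star n) (e : {set 'I_n}) (v : 'I_n).

Lemma complete_edgeP e v : e \in complete_edges n -> v \in e ->
  exists2 x, x != v & e = [set v; x].
Proof.
rewrite inE => /cards2P[a [b [aNb ->]]]; rewrite !inE => /orP[]/eqP->.
  by exists b; rewrite // eq_sym.
by exists a; rewrite // setUC.
Qed.

Lemma center_in_star_edge s e : e \in star_edges s -> s.1 \in e.
Proof. by case/imsetP => x _ ->; rewrite !inE eqxx. Qed.

Lemma star_edges_complete s : is_kstar k s -> star_edges s \subset complete_edges n.
Proof.
case/andP => cNs _; apply/subsetP => _ /imsetP[x sx ->].
by rewrite inE cards2; case: (eqVneq s.1 x) cNs => // ->; rewrite sx.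
Qed.

Lemma card_star_edges s : is_kstar k s -> #|star_edges s| = k.
Proof.
case/andP => cNs /eqP <-; apply: card_in_imset => x y sx _; apply: set2_injr.
by apply: contraNneq cNs => <-.
Qed.
End Stars.

Section Completion.
Variables (n k : nat) (A : {set star n}).
Hypothesis designA : partial_kstar_design k A.
Implicit Types (s t : star n) (e : {set 'I_n}) (v x : 'I_n).

Definition covered_edges := \bigcup_(s in A) star_edges s.

(* By edge-disjointness, the only allowed end of a covered edge is the center
   of the star containing it. *)
Definition allowed_ends e : {set 'I_n} :=
  if e \in covered_edges then [set s.1 | s in A & e \in star_edges s] else e.

Lemma covered_edges_complete : covered_edges \subset complete_edges n.
Proof. by apply/bigcupsP => s As; apply: star_edges_complete (designA.1 s As). Qed.

Lemma star_of_edge_unique s t e : s \in A -> t \in A ->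
  e \in star_edges s -> e \in star_edges t -> s = t.
Proof.
move=> As At es et; apply/eqP; apply: contraT => sNt.
by rewrite (disjointFr (designA.2 _ _ As At sNt) es) in et.
Qed.

Definition out_leaves (S : {set 'I_n}) s := [set v in ~: S | (s.1 \in S) && (v \in s.2)].

Lemma card_allowed_sub (S : {set 'I_n}) :
  #|[set e in complete_edges n | allowed_ends e \subset S]| <=
  'C(#|S|, 2) + \sum_(s in A) #|out_leaves S s|.
Proof.
pose leaving s := [set [set s.1; v] | v in out_leaves S s].
have sub : [set e in complete_edges n | allowed_ends e \subset S] \subset
           [set e : {set 'I_n} | e \subset S & #|e| == 2] :|: \bigcup_(s in A) leaving s.
  apply/subsetP => e; rewrite !inE => /andP[Ke allowedS]; rewrite Ke andbT.
  have [//|eNS] := boolP (e \subset S).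
  move: allowedS; rewrite /allowed_ends; case: ifP => [/bigcupP[s As es]|_ eS]; last first.
    by rewrite eS in eNS.
  move/subsetP => allowedS.
  have sS : s.1 \in S by apply: allowedS; apply/imsetP; exists s; rewrite ?inE ?As.
  case/imsetP: es eNS => x sx ->; rewrite subUset sub1set sS /= sub1set => xNS.
  by apply/bigcupP; exists s => //; apply: imset_f; rewrite !inE sS sx xNS.
apply: leq_trans (subset_leq_card sub) _; apply: leq_trans (leq_card_setU _ _) _.
rewrite cards_draws leq_add2l; apply: leq_trans (leq_card_bigcup _ _) _.
by apply: leq_sum => s _; apply: leq_imset_card.
Qed.

Section CompatibleOrientation.
Variable g : {set 'I_n} -> 'I_n.
Hypothesis g_allowed : {in complete_edges n, forall e, g e \in allowed_ends e}.

Lemma orient_in_edge e : e \in complete_edges n -> g e \in e.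
Proof.
move=> Ke; have := g_allowed Ke; rewrite /allowed_ends; case: ifP => // _.
by case/imsetP => s; rewrite inE => /andP[_ es] ->; apply: center_in_star_edge es.
Qed.

Lemma orient_star_edge s e : s \in A -> e \in star_edges s -> g e = s.1.
Proof.
move=> As es; have cov_e : e \in covered_edges by apply/bigcupP; exists s.
have := g_allowed (subsetP covered_edges_complete _ cov_e).
rewrite /allowed_ends cov_e => /imsetP[t]; rewrite inE => /andP[At et] ->.
by rewrite (star_of_edge_unique At As et es).
Qed.

Lemma indegree_covered v : indegree g covered_edges v = k * #|[set s in A | s.1 == v]|.
Proof.
rewrite /indegree.
have -> : [set e in covered_edges | g e == v] = \bigcup_(s in [set s in A | s.1 == v]) star_edges s.
  apply/setP => e; rewrite inE; apply/andP/bigcupP => [[/bigcupP[s As es] /eqP gev]|[s]].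
    by exists s => //; rewrite inE As -gev (orient_star_edge As es) eqxx.
  rewrite inE => /andP[As /eqP sv] es; split; first by apply/bigcupP; exists s.
  by rewrite (orient_star_edge As es) sv.
rewrite card_bigcup_disjoint => [|s t]; last first.
  by rewrite !inE => /andP[As _] /andP[At _]; apply: designA.2.
rewrite mulnC -sum_nat_const; apply: eq_bigr => s; rewrite inE => /andP[As _].
exact: card_star_edges (designA.1 s As).
Qed.

Definition free_nbrs v :=
  [set x | ([set v; x] \in complete_edges n :\: covered_edges) && (g [set v; x] == v)].

Lemma free_nbrs_neq v x : x \in free_nbrs v -> x != v.
Proof.
rewrite inE => /andP[/setDP[Kvx _] _]; apply: contraTneq Kvx => ->.
by rewrite inE setUid cards1.
Qed.

Lemma card_free_nbrs v :
  #|free_nbrs v| = indegree g (complete_edges n :\: covered_edges) v.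
Proof.
rewrite /indegree.
have -> : [set e in complete_edges n :\: covered_edges | g e == v] =
          [set [set v; x] | x in free_nbrs v].
  apply/setP => e; rewrite inE; apply/andP/imsetP => [[free_e /eqP gev]|[x]].
    have Ke := (setDP free_e).1.
    have ve : v \in e by rewrite -gev orient_in_edge.
    have [x xNv Ee] := complete_edgeP Ke ve.
    by exists x; rewrite // inE -Ee free_e gev eqxx.
  by rewrite inE => /andP[free_x gv] ->.
by rewrite card_in_imset // => x y /free_nbrs_neq xNv _; apply: set2_injr.
Qed.

Lemma k_dvd_free_nbrs v : k %| indegree g (complete_edges n) v -> k %| #|free_nbrs v|.
Proof.
rewrite (indegreeID _ _ covered_edges) (setIidPr covered_edges_complete).
by rewrite indegree_covered card_free_nbrs dvdn_addr ?dvdn_mulr.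
Qed.

Section Blocks.
Variable blocks : 'I_n -> {set {set 'I_n}}.
Hypothesis blocks_partition : forall v, partition (blocks v) (free_nbrs v).
Hypothesis card_blocks : forall v, {in blocks v, forall B : {set 'I_n}, #|B| = k}.

Definition new_stars : {set star n} :=
  [set ((v, B) : star n) | v in [set: 'I_n], B in blocks v].

Lemma new_starP s : s \in new_stars ->
  exists v B, [/\ s = (v, B), B \in blocks v & B \subset free_nbrs v].
Proof.
case/imset2P => v B _ Bv ->; exists v, B; split=> //.
exact: partitionS (blocks_partition v) Bv.
Qed.

Lemma new_star_kstar s : s \in new_stars -> is_kstar k s.
Proof.
case/new_starP => v [B [-> Bv /subsetP Bfree]]; rewrite /is_kstar /= (card_blocks Bv) eqxx andbT.
by apply/negP => /Bfree /free_nbrs_neq; rewrite eqxx.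
Qed.

Lemma new_star_edge s e : s \in new_stars -> e \in star_edges s ->
  e \in complete_edges n :\: covered_edges /\ g e = s.1.
Proof.
case/new_starP => v [B [-> _ /subsetP Bfree]] /imsetP[x /Bfree] /=.
by rewrite inE => /andP[free_e /eqP gv] ->.
Qed.

Lemma new_stars_disjoint s t : s \in new_stars -> t \in new_stars -> s != t ->
  [disjoint star_edges s & star_edges t].
Proof.
move=> news newt; apply: contraNT; rewrite -setI_eq0 => /set0Pn[e /setIP[es et]].
have [_ ges] := new_star_edge news es; have [_ get] := new_star_edge newt et.
case/new_starP: news ges es => v [B [-> Bv /subsetP Bfree]] /= gev /imsetP[x Bx Ee].
case/new_starP: newt get et => w [B' [-> B'w _]] /= gew /imsetP[y B'y Ee'].
rewrite gev in gew; subst w.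
have xy : x = y := set2_injr (free_nbrs_neq (Bfree x Bx)) (etrans (esym Ee) Ee').
subst y; have tiP := partition_trivIset (blocks_partition v).
by rewrite -(def_pblock tiP Bv Bx) -(def_pblock tiP B'w B'y) eqxx.
Qed.

Lemma new_stars_cover e : e \in complete_edges n :\: covered_edges ->
  exists2 s, s \in new_stars & e \in star_edges s.
Proof.
move=> free_e; have Ke := (setDP free_e).1.
have [x _ Ee] := complete_edgeP Ke (orient_in_edge Ke).
have x_cover : x \in cover (blocks (g e)).
  by rewrite (cover_partition (blocks_partition _)) inE -Ee free_e eqxx.
pose B := pblock (blocks (g e)) x; exists (g e, B).
  by apply/imset2P; exists (g e) B; rewrite ?inE ?pblock_mem.
by rewrite {1}Ee; apply: imset_f; rewrite mem_pblock.
Qed.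

Lemma covered_new_disjoint s t : s \in A -> t \in new_stars ->
  [disjoint star_edges s & star_edges t].
Proof.
move=> As newt; rewrite disjoints_subset; apply/subsetP => e es; rewrite inE.
apply/negP => et; have [/setDP[_ /negP ncov] _] := new_star_edge newt et.
by apply: ncov; apply/bigcupP; exists s.
Qed.

Lemma completable_of_blocks : completable k A.
Proof.
exists (A :|: new_stars); split; [exact: subsetUl | split; [split|]].
- by move=> s /setUP[/designA.1 | /new_star_kstar].
- move=> s t /setUP[As|news] /setUP[At|newt] sNt.
  + exact: designA.2.
  + exact: covered_new_disjoint.
  + by rewrite disjoint_sym; apply: covered_new_disjoint.
  + exact: new_stars_disjoint.
- apply/eqP; rewrite eqEsubset; apply/andP; split.
    apply/bigcupsP => s /setUP[As|news]; apply: star_edges_complete.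
      exact: designA.1.
    exact: new_star_kstar.
  apply/subsetP => e Ke; case: (boolP (e \in covered_edges)) => [/bigcupP[s As es]|ncov].
    by apply/bigcupP; exists s; rewrite ?inE ?As.
  have [|s news es] := new_stars_cover (e := e); first by rewrite inE ncov.
  by apply/bigcupP; exists s; rewrite ?inE ?news ?orbT.
Qed.
End Blocks.

Lemma completable_of_orientation : 0 < k ->
  (forall v, k %| indegree g (complete_edges n) v) -> completable k A.
Proof.
move=> k_gt0 k_dvd.
have [blocks partP cardP] :=
  fin_all_exists2 (fun v => uniform_partition k_gt0 (k_dvd_free_nbrs (k_dvd v))).
exact: completable_of_blocks partP cardP.
Qed.
End CompatibleOrientation.
End Completion.

Lemma bin2_mul2 m : 'C(m, 2) * 2 = m * m.-1.
Proof. by rewrite bin2 -divn2 divnK // dvdn2 oddM; case: m => //= m; rewrite andNb. Qed.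

Lemma bin2D s t : 'C(s + t, 2) = 'C(s, 2) + s * t + 'C(t, 2).
Proof.
apply/eqP; rewrite -(eqn_pmul2r (_ : 0 < 2)) // !mulnDl !bin2_mul2.
case: s => [|s]; case: t => [|t]; rewrite ?addn0 ?add0n ?muln0 ?mul0n //=; apply/eqP; nia.
Qed.

Lemma admissible_bounds k n Q : 3 <= k -> 'C(n, 2) = Q * k -> 2 * k + 1 < n -> n <= 3 * k ->
  [/\ 2 * k + 3 <= n, n + 3 <= Q & 2 * Q <= 4 * n - 3 * k].
Proof.
move=> k3 binQ n_gt n_le; have := bin2_mul2 n; rewrite binQ => nQ.
have n_ge : 2 * k + 3 <= n.
  have [//|n_lt] := leqP (2 * k + 3) n; have n_eq : n = 2 * k + 2 by lia.
  rewrite n_eq in nQ; case: (ltnP Q (2 * k + 4)) => Q_k; have := leq_mul Q_k (leqnn k); nia.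
split => //; first by have [//|Q_lt] := leqP (n + 3) Q; nia.
by case: (leqP (2 * Q) (4 * n - 3 * k)) => [//|Q_gt]; nia.
Qed.

Lemma hall_small_arith k s : 1 <= s <= 2 * k -> 'C(s, 2) + k <= k * s.
Proof. by move=> /andP[s1 s2]; have := bin2_mul2 s; nia. Qed.

Lemma hall_large_arith k s t a b c : 2 * k + 1 <= s -> 2 * k + 3 <= s + t -> a + b <= 3 ->
  c + b = t -> c * (2 * k + 1) + b * (2 * k + a) <= s * t + 'C(t, 2).
Proof.
move=> s_ge st_ge ab cb; have t2 := bin2_mul2 t.
have : b <= 3 by lia.
by case: b ab cb => [|[|[|[|//]]]] ab cb; nia.
Qed.

Section ThreeStars.
Variables (n k Q : nat) (A : {set star n}).
Hypotheses (k_ge3 : 3 <= k) (binQ : 'C(n, 2) = Q * k) (n_gt : 2 * k + 1 < n) (n_le : n <= 3 * k).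
Hypotheses (designA : partial_kstar_design k A) (A3 : #|A| = 3).
Implicit Types (S H : {set 'I_n}) (v : 'I_n) (s : star n).

Definition centers := [set s.1 | s in A].
Definition leaf_deg v := #|[set s in A | v \in s.2]|.

Lemma sum_leaf_deg : \sum_v leaf_deg v = 3 * k.
Proof.
rewrite /leaf_deg -(double_count (mem A) xpredT (fun s v => v \in s.2)) -A3.
rewrite -sum_nat_const; apply: eq_bigr => s As.
by have /andP[_ /eqP <-] := designA.1 s As; apply: eq_card => v; rewrite inE.
Qed.

Lemma two_le_card_centers : 1 < #|centers|.
Proof.
have [s0 As0] : exists s0, s0 \in A by apply/card_gt0P; rewrite A3.
set c := s0.1; rewrite ltnNge; apply/negP => /card_le1P/(_ c (imset_f _ As0)) one_center.
have centerE s : s \in A -> s.1 = c.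
  by move=> As; have := one_center s.1; rewrite imset_f // inE => /esym/eqP.
have deg_le v : leaf_deg v <= (v != c).
  have [->|_] := eqVneq v c.
    rewrite leqn0 cards_eq0; apply/eqP/setP => s; rewrite !inE.
    apply/negP => /andP[As]; rewrite -(centerE s As).
    by have /andP[/negPf->] := designA.1 s As.
  apply/card_le1P => s; rewrite inE => /andP[As vs] t.
  have edge_c t' : t' \in A -> v \in t'.2 -> [set c; v] \in star_edges t'.
    by move=> At' vt'; rewrite -(centerE t' At'); apply: imset_f.
  rewrite !inE; apply/idP/eqP => [/andP[At vt]|->]; last by rewrite As vs.
  exact: (star_of_edge_unique designA At As (edge_c t At vt) (edge_c s As vs)).
have : \sum_v leaf_deg v <= \sum_v (v != c) by apply: leq_sum => v _; apply: deg_le.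
rewrite sum_leaf_deg -(card_set_cond xpredT (fun v => v != c)).
have -> : #|[set v | true && (v != c)]| = n.-1.
  by rewrite -[n in n.-1]card_ord -(cardsC1 c); apply: eq_card => v; rewrite !inE.
lia.
Qed.

Definition centered_in S := [set s in A | s.1 \in S].

Lemma card_centered_in S : #|centered_in S| <= #|centers :&: S| + 1.
Proof.
have := leq_card_imsetD fst A S; rewrite -/centers -/(centered_in S) A3.
have := cardsID S centers; have := two_le_card_centers.
move: #|centered_in S| #|centers| #|centers :&: S| #|centers :\: S| => a c i d.
lia.
Qed.

Lemma centered_in0 S : #|S| = 0 -> #|centered_in S| = 0.
Proof.
move/cards0_eq->; apply/eqP; rewrite cards_eq0; apply/eqP/setP => s.
by rewrite !inE andbF.
Qed.

Lemma heavy_set : exists H,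
  [/\ centers \subset H, #|H| = Q - n & {in H :\: centers, forall v, leaf_deg v <= 1}].
Proof.
have [n_ge Q_ge Q_le] := admissible_bounds k_ge3 binQ n_gt n_le.
have C_le : #|centers| <= 3 by rewrite -A3 leq_imset_card.
pose Y := [set v | (v \notin centers) && (leaf_deg v <= 1)].
have Y_ge : Q - n - #|centers| <= #|Y|.
  have heavy_le : #|[set v | true && (1 < leaf_deg v)]| * 2 <= 3 * k.
    rewrite card_set_cond -sum_leaf_deg big_distrl /=; apply: leq_sum => v _.
    by case: ltnP.
  have := cardsC centers; rewrite card_ord => cardC.
  have : #|~: centers| <= #|Y| + #|[set v | true && (1 < leaf_deg v)]|.
    rewrite -(cardsID Y (~: centers)) leq_add ?subset_leq_card //.
      by apply/subsetP => v; rewrite inE => /andP[].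
    by apply/subsetP => v; rewrite !inE; case: (v \in centers) => //=; rewrite andbT -ltnNge.
  lia.
have [X XY cardX] := exists_subset_card Y_ge.
have XNC : [disjoint centers & X].
  rewrite disjoint_sym disjoints_subset; apply/subsetP => v /(subsetP XY).
  by rewrite !inE => /andP[].
exists (centers :|: X); split; first exact: subsetUl.
  rewrite cardsU (disjoint_setI0 XNC) cards0 subn0 cardX subnKC //.
  by apply: leq_trans C_le _; lia.
move=> v; rewrite !inE => /andP[vNC /orP[vC|vX]]; first by rewrite vC in vNC.
by have := subsetP XY v vX; rewrite inE => /andP[].
Qed.

Definition cap H v := k * (1 + (v \in H)).

Lemma sum_cap H S : \sum_(v in S) cap H v = k * (#|S| + #|S :&: H|).
Proof.
rewrite -big_distrr big_split /= sum1_card; congr (k * (_ + _)).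
by rewrite -card_set_cond; apply: eq_card => v; rewrite !inE.
Qed.

Lemma out_leaves_le S s : s \in A -> #|out_leaves S s| <= k * (s.1 \in S).
Proof.
move=> As; have [sS|sNS] := boolP (s.1 \in S); last first.
  by rewrite muln0 leqn0 cards_eq0; apply/eqP/setP => v; rewrite !inE (negbTE sNS) andbF.
have /andP[_ /eqP <-] := designA.1 s As; rewrite muln1 subset_leq_card //.
by apply/subsetP => v; rewrite !inE => /and3P[].
Qed.

Lemma hall_condition_small H S : centers \subset H -> #|S| <= 2 * k ->
  'C(#|S|, 2) + \sum_(s in A) #|out_leaves S s| <= \sum_(v in S) cap H v.
Proof.
move=> CH S_le; rewrite sum_cap mulnDr.
have out_le : \sum_(s in A) #|out_leaves S s| <= k * #|centered_in S|.
  rewrite /centered_in card_set_cond big_distrr /=; apply: leq_sum => s.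
  exact: out_leaves_le.
have [S0|S_gt0] := posnP #|S|.
  by move: out_le; rewrite centered_in0 // S0 muln0 leqn0 => /eqP->.
have CS_le : #|centers :&: S| <= #|S :&: H| by rewrite setIC subset_leq_card ?setIS.
have : k * #|centered_in S| <= k * #|S :&: H| + k.
  by rewrite -mulnSr leq_mul2l (leq_trans (card_centered_in S)) ?orbT // addn1.
have := hall_small_arith (k := k) (s := #|S|); rewrite S_gt0 S_le => /(_ isT).
lia.
Qed.

Definition leaf_deg_from S v := #|[set s in A | (s.1 \in S) && (v \in s.2)]|.

Lemma sum_out_leaves S :
  \sum_(s in A) #|out_leaves S s| = \sum_(v in ~: S) leaf_deg_from S v.
Proof. exact: double_count. Qed.

Lemma leaf_deg_from_le S v : leaf_deg_from S v <= leaf_deg v.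
Proof. by apply: subset_leq_card; apply/subsetP => s; rewrite !inE => /and3P[-> _ ->]. Qed.

Lemma leaf_deg_from_le_centered S v : leaf_deg_from S v <= #|centered_in S|.
Proof. by apply: subset_leq_card; apply/subsetP => s; rewrite !inE => /and3P[-> ->]. Qed.

Lemma leaf_deg_le3 v : leaf_deg v <= 3.
Proof. by rewrite -A3 subset_leq_card //; apply/subsetP => s; rewrite inE => /andP[]. Qed.

Lemma hall_condition_large H S : centers \subset H -> #|H| = Q - n ->
  {in H :\: centers, forall v, leaf_deg v <= 1} -> 2 * k + 1 <= #|S| ->
  'C(#|S|, 2) + \sum_(s in A) #|out_leaves S s| <= \sum_(v in S) cap H v.
Proof.
move=> CH cardH light S_ge.
have [n_ge Q_ge _] := admissible_bounds k_ge3 binQ n_gt n_le.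
set T := ~: S; have ST : #|S| + #|T| = n by rewrite cardsC card_ord.
have total : \sum_(v in S) cap H v + \sum_(v in T) cap H v = 'C(#|S| + #|T|, 2).
  have : #|S :&: H| + #|T :&: H| = #|H| by rewrite -(cardsID S H) setDE !(setIC H).
  rewrite !sum_cap ST binQ -mulnDr mulnC => splitH; congr (_ * _); lia.
have light_bound v : v \in T :\: centers -> leaf_deg_from S v + cap H v <= 2 * k + 1.
  move=> vTC; have := leaf_deg_from_le S v; rewrite /cap.
  have [vH|_] := boolP (v \in H); last by have := leaf_deg_le3 v; lia.
  by have := light v; rewrite inE vH (setDP vTC).2 => /(_ isT); lia.
have center_bound v : v \in T :&: centers ->
    leaf_deg_from S v + cap H v <= 2 * k + #|centered_in S|.
  case/setIP => _ /(subsetP CH) vH; rewrite /cap vH addnC.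
  by have := leaf_deg_from_le_centered S v; lia.
have sum_bound : \sum_(v in T) (leaf_deg_from S v + cap H v) <=
    #|T :\: centers| * (2 * k + 1) + #|T :&: centers| * (2 * k + #|centered_in S|).
  rewrite (big_setID centers) /= addnC -!sum_nat_const.
  by apply: leq_add; apply: leq_sum.
have ab : #|centered_in S| + #|T :&: centers| <= 3.
  by rewrite -A3 addnC setIC -setDE; apply: leq_card_imsetD.
have cb : #|T :\: centers| + #|T :&: centers| = #|T| by rewrite addnC cardsID.
have st_ge : 2 * k + 3 <= #|S| + #|T| by rewrite ST.
have := hall_large_arith S_ge st_ge ab cb.
rewrite sum_out_leaves -/T; move: sum_bound total; rewrite big_split bin2D /=.
lia.
Qed.

Lemma hall_condition H : centers \subset H -> #|H| = Q - n ->
  {in H :\: centers, forall v, leaf_deg v <= 1} ->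
  forall S, #|[set e in complete_edges n | allowed_ends A e \subset S]| <= \sum_(v in S) cap H v.
Proof.
move=> CH cardH light S; apply: leq_trans (card_allowed_sub A S) _.
have [S_le|S_gt] := leqP #|S| (2 * k); first exact: hall_condition_small.
by apply: hall_condition_large; rewrite ?addn1.
Qed.

Lemma three_stars_completable : completable k A.
Proof.
have [H [CH cardH light]] := heavy_set.
have [n_ge Q_ge _] := admissible_bounds k_ge3 binQ n_gt n_le.
have v0 : 'I_n := Ordinal (leq_trans (ltn0Sn _) n_gt).
have [g g_ok g_le] := hall_orientation v0 (hall_condition CH cardH light).
have sum_capE : \sum_v cap H v = #|complete_edges n|.
  rewrite (eq_bigl (mem [set: 'I_n])) => [|v]; last by rewrite /= in_setT.
  rewrite sum_cap setTI cardsT card_ord cardH card_draws card_ord binQ mulnC; congr (_ * _); lia.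
apply: (completable_of_orientation designA g_ok); first lia.
by move=> v; rewrite (indegree_eq_cap g_le sum_capE) dvdn_mulr.
Qed.

End ThreeStars.

Theorem lemma10 (k n : nat) (A : {set star n}) :
  3 <= k -> admissible k n -> 2 * k + 1 < n -> n <= 3 * k ->
  partial_kstar_design k A -> #|A| = 3 ->
  completable k A.
Proof.
move=> k_ge3 /eqP adm n_gt n_le designA A3.
have binQ : 'C(n, 2) = 'C(n, 2) %/ k * k by rewrite divnK // /dvdn adm.
exact: three_stars_completable binQ n_gt n_le designA A3.
Qed.
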